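(* Let $m\ge3$. If $\varphi:\mathbb{R}\to\mathbb{R}$ is a nonconstant $C^2$ function and $c$ is a noncritical value of $\varphi$, then the constant level set $N_c=\{t\in\mathbb{R}^m_+:\ \varphi(t^1\cdots t^m)=c\}$ is a union of simple Tzitzeica hypersurfaces.
   Context: A hypersurface $M\subset\mathbb{R}^m_+$, $m\ge3$, is a Tzitzeica hypersurface if there is a constant $a\in\mathbb{R}$ such that $K=a\,d^{m+1}$ at every point $t\in M$, where $K$ is the Gauss curvature of $M$ at $t$ and $d$ is the distance from the origin to the tangent hyperplane of $M$ at $t$. The simple Tzitzeica hypersurfaces are the constant level sets $t^1\cdots t^m=k$. A value $c$ is noncritical for $\varphi$ if $\varphi'(k)\neq0$ for every $k$ with $\varphi(k)=c$. *)

From HB Require Import structures.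
From mathcomp Require Import all_boot all_order all_algebra.
From mathcomp Require Import all_classical all_reals all_analysis.
Unset Printing Implicit Defensive.
Import Order.TTheory GRing.Theory Num.Theory.
Import numFieldNormedType.Exports.
Local Open Scope classical_set_scope.
Local Open Scope ring_scope.

Definition C2 {R : realType} (f : R -> R) : Prop :=
  (forall x, derivable f x 1) /\
  (forall x, derivable (derive1 f) x 1) /\
  continuous (derive1 (derive1 f)).

Definition nonconstant {R : realType} (f : R -> R) : Prop :=
  exists x y, f x != f y.

Definition noncritical {R : realType} (phi : R -> R) (c : R) : Prop :=
  forall k, phi k = c -> derive1 phi k != 0.

Definition pos_orthant {R : realType} (m : nat) : set 'rV[R]_m :=
  [set t | forall i : 'I_m, 0 < t ord0 i].

Definition coordprod {R : realType} (m : nat) (t : 'rV[R]_m) : R :=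
  \prod_(i < m) t ord0 i.

Definition simple_Tzitzeica {R : realType} (m : nat) (M : set 'rV[R]_m) : Prop :=
  exists k : R, 0 < k /\ M = [set t | pos_orthant m t /\ coordprod m t = k].

Definition level_Nc {R : realType} (m : nat) (phi : R -> R) (c : R) : set 'rV[R]_m :=
  [set t | pos_orthant m t /\ phi (coordprod m t) = c].

From mathcomp Require Import all_boot all_order all_algebra.
From mathcomp Require Import all_classical all_reals all_analysis.
Import Order.TTheory GRing.Theory Num.Theory.
Local Open Scope classical_set_scope.
Local Open Scope ring_scope.

(* N_c depends on t only through the product t^1 ... t^m, which is positive on
   the orthant; so N_c is the union of the level sets t^1 ... t^m = k over the
   positive solutions k of phi k = c.  The regularity hypotheses only serve, in
   the paper, to make N_c a hypersurface; the decomposition itself does not use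
   them. *)

Definition prod_level {R : realType} (m : nat) (k : R) : set 'rV[R]_m :=
  [set t | pos_orthant m t /\ coordprod m t = k].

Lemma coordprod_gt0 (R : realType) (m : nat) (t : 'rV[R]_m) :
  pos_orthant m t -> 0 < coordprod m t.
Proof. by move=> t_pos; apply: prodr_gt0 => i _; exact: t_pos. Qed.

Lemma prod_level_simple_Tzitzeica (R : realType) (m : nat) (k : R) :
  0 < k -> simple_Tzitzeica m (prod_level m k).
Proof. by move=> k_gt0; exists k. Qed.

Lemma level_Nc_bigcup (R : realType) (m : nat) (phi : R -> R) (c : R) :
  level_Nc m phi c =
  \bigcup_(k in [set k | 0 < k /\ phi k = c]) prod_level m k.
Proof.
apply/seteqP; split => t.
- move=> [t_pos phi_t]; exists (coordprod m t) => //.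
  by split=> //; exact: coordprod_gt0.
- by move=> [k [_ phi_k] [t_pos t_k]]; split=> //; rewrite t_k.
Qed.

Theorem mainTheorem7 (R : realType) (m : nat) (phi : R -> R) (c : R) :
  (3 <= m)%N -> C2 phi -> nonconstant phi -> noncritical phi c ->
  exists F : set (set 'rV[R]_m),
    (forall M, F M -> simple_Tzitzeica m M) /\
    level_Nc m phi c = \bigcup_(M in F) M.
Proof.
move=> _ _ _ _.
exists (prod_level m @` [set k | 0 < k /\ phi k = c]); split.
  by move=> _ [k [k_gt0 _] <-]; exact: prod_level_simple_Tzitzeica.
by rewrite level_Nc_bigcup bigcup_image.
Qed.
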